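(* Let $G=(N,T,F,P,S)$ be a grounded indexed grammar, let $D$ be a derivation tree of $G$ for a string $s$ with some set of marked positions, and let $H=(v_0,\dots,v_m)$ be a path in $D$ from the root to a leaf (excluding the leaf) containing more than $(|N|\cdot 3^{|N|})^{|N|^2\cdot 3^{|N|}+1}$ branch nodes. Then there are indices $0\le b_1<t_1<t_2\le b_2\le m$ such that: $\sigma(v_{b_1})=\sigma(v_{t_1})$ and $\sigma(v_{t_2})=\sigma(v_{b_2})$; $v_{b_2}\in\beta(v_{b_1})$ and $v_{t_2}\in\beta(v_{t_1})$; $\tau(v_{b_1})=\tau(v_{t_1})$; and there is a branch node among $v_{b_1},\dots,v_{t_1-1}$ or among $v_{t_2},\dots,v_{b_2-1}$.
   Context: An indexed grammar $G=(N,T,F,P,S)$ has finite alphabets $N$ (nonterminals), $T$ (terminals), $F$ (stack symbols), start symbol $S\in N$, and productions of the forms $A\to r$, $A\to Bf$, $Af\to r$ ($A,B\in N$, $f\in F$, $r\in(N\cup T)^*$); a nonterminal carries a stack $x\in F^*$ (written $Ax$, first symbol of $x$ on top), and for $r\in(N\cup T)^*$, $r\{x\}$ is $r$ with each nonterminal $A$ replaced by $Ax$. Applying $A\to r$ to $Ax$ gives $r\{x\}$; applying $A\to Bf$ to $Ax$ gives $Bfx$; applying $Af\to r$ to $Afy$ gives $r\{y\}$. $G$ is grounded if there is $\$\in F$ such that every production has one of the forms $S\to A\$$, $A\to r$, $A\to Bf$, $Af\to r$, $A\$\to s$ with $A,B\in N\setminus\{S\}$, $f\in F\setminus\{\$\}$,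 $r\in(N\setminus\{S\})^+$, $s\in T^*$. A derivation tree $D$ for $s\in T^*$ is an ordered rooted tree whose internal nodes are labelled in $NF^*$ and whose leaves are labelled in $T^*$; the root is labelled $S$ (empty stack); each internal node labelled $Ax$ has as children, in order, the result of applying one production of $G$ to $Ax$ (internal children labelled by the nonterminals-with-stacks produced, or, for a production $A\$\to s'$ with $x=\$$, a single leaf labelled $s'$); the concatenation of leaf labels from left to right is $s$. Given a set of marked positions of $s$: a leaf is marked if its label contains a marked position of $s$; an internal node is marked if it has a marked descendant; a branch node is a node with more than one marked child. A path is a list of nodes $(v_0,\dots,v_m)$, $m\ge 0$, with $v_i$ a child of $v_{i-1}$. For an internal node $v$ labelled $Ax$: $\sigma(v)=A$ and $\eta(v)=|x|$. A node $v'$ is in the scope of $v$ iff $v'$ is internal and there is a path from $v$ to $v'$ all of whose nodes $v''$ (including $v'$) satisfy $\eta(v'')\ge\eta(v)$. $\beta(v)$ is the set of nodes $v'$ in the scope of $v$ such that no child of $v'$ is in the scope of $v$. $\tau(v)$ is the triple $(\tau_1,\tau_2,\tau_3)$ where $\tau_1=\{A\in N:\sigma(v')\neq A$ for all $v'\in\beta(v)\}$, $\tau_2=\{A\in N:\sigma(v')=A$ for some $v'\in\beta(v)$ and $\sigma(v')\ne A$ for all marked $v'\in\beta(v)\}$, $\tau_3=\{A\in N:\sigma(v')=A$ for some marked $v'\in\beta(v)\}$. *)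

From Stdlib Require List.
From mathcomp Require Import all_boot.
Set Implicit Arguments.
Unset Strict Implicit.
Unset Printing Implicit Defensive.

Section IndexedGrammars.
Variables (N T F : finType).

(* Productions of an indexed grammar:
   PRule A r   :  A -> r
   PPush A B f :  A -> B f
   PPop A f r  :  A f -> r        (r in (N u T)^* ) *)
Inductive production :=
| PRule of N & seq (N + T)
| PPush of N & N & F
| PPop of N & F & seq (N + T).

(* G = (N, T, F, P, S); the finite set P is given as a list. *)
Record grammar := Grammar { g_start : N ; g_prods : seq production }.

Definition nonterm_plus (S : N) (r : seq (N + T)) : Prop :=
  exists bs : seq N, r = map inl bs /\ bs <> [::] /\ ~ List.In S bs.

Definition term_star (r : seq (N + T)) : Prop :=
  exists w : seq T, r = map inr w.

(* G is grounded, with witness stack symbol d (the "$"). *)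
Definition grounded_by (G : grammar) (d : F) : Prop :=
  let S := g_start G in
  forall p, List.In p (g_prods G) ->
  match p with
  | PPush A B f => (A = S /\ B <> S /\ f = d) \/ (A <> S /\ B <> S /\ f <> d)
  | PRule A r => A <> S /\ nonterm_plus S r
  | PPop A f r => A <> S /\ ((f <> d /\ nonterm_plus S r) \/ (f = d /\ term_star r))
  end.

Definition grounded (G : grammar) : Prop := exists d, grounded_by G d.

(* Derivation trees: internal nodes labelled A x (A in N, x in F^*, top first),
   leaves labelled by strings in T^*. *)
Inductive dtree :=
| Leaf of seq T
| Node of N & seq F & seq dtree.

Definition label (t : dtree) : option (N * seq F) :=
  match t with Leaf _ => None | Node A x _ => Some (A, x) end.

Definition applies (d : F) (p : production) (A : N) (x : seq F) (ch : seq dtree) : Prop :=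
  match p with
  | PRule A' r => A' = A /\
      exists bs : seq N, r = map inl bs /\ map label ch = map (fun B => Some (B, x)) bs
  | PPush A' B f => A' = A /\ map label ch = [:: Some (B, f :: x)]
  | PPop A' f r => A' = A /\ exists y, x = f :: y /\
      ((f = d /\ y = [::] /\ exists w : seq T, r = map inr w /\ ch = [:: Leaf w])
       \/ (f <> d /\ exists bs : seq N, r = map inl bs /\
                       map label ch = map (fun B => Some (B, y)) bs))
  end.

Fixpoint valid (G : grammar) (d : F) (t : dtree) : Prop :=
  match t with
  | Leaf _ => True
  | Node A x ch =>
      (exists p, List.In p (g_prods G) /\ applies d p A x ch) /\
      foldr (fun c P => valid G d c /\ P) True ch
  end.

Fixpoint yield (t : dtree) : seq T :=
  match t with
  | Leaf w => w
  | Node _ _ ch => flatten (map yield ch)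
  end.

Definition derivation_tree (G : grammar) (d : F) (s : seq T) (D : dtree) : Prop :=
  valid G d D /\ label D = Some (g_start G, [::]) /\ yield D = s.

(* Nodes are addressed by lists of child indices (0-based) from the root. *)
Fixpoint sub (t : dtree) (a : seq nat) {struct a} : option dtree :=
  match a with
  | [::] => Some t
  | i :: a' =>
      match t with
      | Leaf _ => None
      | Node _ _ ch => if onth ch i is Some c then sub c a' else None
      end
  end.

Definition lab (D : dtree) (v : seq nat) : option (N * seq F) := obind label (sub D v).

(* sigma(v) (None if v is not an internal node) *)
Definition sigma (D : dtree) (v : seq nat) : option N := omap fst (lab D v).

(* position in the yield of the first symbol below node at address a *)
Fixpoint offset (t : dtree) (a : seq nat) {struct a} : nat :=
  match a, t with
  | i :: a', Node _ _ ch =>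
      size (flatten (map yield (take i ch))) +
      (if onth ch i is Some c then offset c a' else 0)
  | _, _ => 0
  end.

Definition leaf_marked (s : seq T) (M : {set 'I_(size s)}) (D : dtree) (v : seq nat) : Prop :=
  exists w, sub D v = Some (Leaf w) /\
  exists k : 'I_(size s), k \in M /\ offset D v <= k < offset D v + size w.

Definition marked (s : seq T) (M : {set 'I_(size s)}) (D : dtree) (v : seq nat) : Prop :=
  leaf_marked M D v \/
  (lab D v <> None /\ exists c, c <> [::] /\ leaf_marked M D (v ++ c)).

Definition branch_node (s : seq T) (M : {set 'I_(size s)}) (D : dtree) (v : seq nat) : Prop :=
  exists i j, i <> j /\ marked M D (rcons v i) /\ marked M D (rcons v j).

(* H = (v_0,...,v_m) is a path from the root to a leaf (leaf excluded):
   v_i is the node at address [take i a], m = size a, and some child of v_m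
   is a leaf. *)
Definition root_leaf_path (D : dtree) (a : seq nat) : Prop :=
  exists j w, sub D (rcons a j) = Some (Leaf w).

(* v' in the scope of v: v' internal and every node v'' on the (unique) path
   from v to v' (both included) satisfies eta(v'') >= eta(v). *)
Definition in_scope (D : dtree) (v v' : seq nat) : Prop :=
  exists A x, lab D v = Some (A, x) /\
  exists c, v' = v ++ c /\
  forall k, k <= size c -> exists B y, lab D (v ++ take k c) = Some (B, y) /\ size x <= size y.

Definition in_beta (D : dtree) (v v' : seq nat) : Prop :=
  in_scope D v v' /\ forall j, ~ in_scope D v (rcons v' j).

Definition tau (s : seq T) (M : {set 'I_(size s)}) (D : dtree) (v : seq nat)
  : (N -> Prop) * (N -> Prop) * (N -> Prop) :=
  ((fun A => forall v', in_beta D v v' -> sigma D v' <> Some A),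
   (fun A => (exists v', in_beta D v v' /\ sigma D v' = Some A) /\
             (forall v', in_beta D v v' -> marked M D v' -> sigma D v' <> Some A)),
   (fun A => exists v', in_beta D v v' /\ marked M D v' /\ sigma D v' = Some A)).

End IndexedGrammars.

(* Let h(k) be the stack height of v_k.  It grows by at most one per step, and
   the scope of v_i along H ends at e(i), the last index before h drops below
   h(i); since siblings carry the same stack, v_{e(i)} is in beta(v_i).  The
   intervals [i, e(i)] are laminar.  If [i, e(i)) contains w >= 2f+2 branch
   nodes, then some j in (i, e(i)] has fewer of them but still at least f (the
   interval of i splits into those of i+1 and, possibly, e(i+1)+1, plus two
   points).  Starting at the root, whose scope is all of H, this yields
   |N|^2 3^|N| + 1 strictly nested intervals; two of them, i = b1 and j = t1,
   agree on (sigma(v_i), tau(v_i), sigma(v_{e(i)})), a triple with at most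
   |N|^2 3^|N| values.  A branch node counted for b1 but not for t1 lies in
   [b1, t1) or in [e(t1), e(b1)). *)

From mathcomp Require Import all_boot zify.
From Stdlib Require Import ClassicalEpsilon FunctionalExtensionality PropExtensionality.
Set Implicit Arguments.
Unset Strict Implicit.
Unset Printing Implicit Defensive.

Section ScopeEnd.
Variables (m : nat) (h : nat -> nat).

Definition scope_end i := i + find (fun j => h j.+1 < h i) (iota i (m - i)).

Lemma leq_scope_end i : i <= scope_end i.
Proof. exact: leq_addr. Qed.

Lemma scope_end_le i : i <= m -> scope_end i <= m.
Proof.
move=> im; have := find_size (fun j => h j.+1 < h i) (iota i (m - i)).
rewrite size_iota /scope_end; lia.
Qed.

Lemma scope_end_id i : m <= i -> scope_end i = i.
Proof. by move=> mi; rewrite /scope_end (_ : m - i = 0) ?addn0 //; lia. Qed.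

Lemma scope_end_gt_bound i : i < scope_end i -> i < m.
Proof. by case: (leqP m i) => [mi|//]; rewrite scope_end_id // ltnn. Qed.

Lemma scope_end_min i k : i <= k <= scope_end i -> h i <= h k.
Proof.
case/andP=> ik ke; have [ik'|] := ltnP i k; last by move=> ki; have -> : k = i by lia.
set p := fun j => h j.+1 < h i.
have lt_find : (k - i).-1 < find p (iota i (m - i)) by move: ke; rewrite /scope_end -/p; lia.
have lt_size : (k - i).-1 < m - i.
  by have := find_size p (iota i (m - i)); rewrite size_iota; lia.
have := before_find 0 lt_find; rewrite nth_iota // /p.
have -> : (i + (k - i).-1).+1 = k by lia.
by move/negbT; rewrite -leqNgt.
Qed.

Lemma scope_end_drop i : scope_end i < m -> h (scope_end i).+1 < h i.
Proof.
move=> em; set p := fun j => h j.+1 < h i.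
have lt_find : find p (iota i (m - i)) < size (iota i (m - i)).
  by move: em; rewrite size_iota /scope_end -/p; lia.
have := nth_find 0 (etrans (has_find _ _) lt_find).
by rewrite nth_iota; [move=> hp; exact: hp | rewrite size_iota in lt_find].
Qed.

Lemma scope_end_nest i j : i <= j <= scope_end i -> scope_end j <= scope_end i.
Proof.
move=> ije; case/andP: (ije) => ij je.
have [mi|im] := leqP m i.
  by have -> : j = i by move: je; rewrite scope_end_id //; lia.
rewrite leqNgt; apply/negP => lt.
have jm : j <= m by have := scope_end_le (ltnW im); lia.
have eim : scope_end i < m by have := scope_end_le jm; lia.
have := scope_end_drop eim; have := scope_end_min ije.
have : j <= (scope_end i).+1 <= scope_end j by lia.
move/scope_end_min; lia.
Qed.

Lemma scope_end_ext i j :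
  i <= j <= scope_end i -> h j <= h i -> scope_end i <= scope_end j.
Proof.
move=> ije hji; case/andP: (ije) => ij je.
have [mi|im] := leqP m i.
  by have -> : j = i by move: je; rewrite scope_end_id //; lia.
rewrite leqNgt; apply/negP => lt.
have ejm : scope_end j < m by have := scope_end_le (ltnW im); lia.
have := scope_end_drop ejm.
have : i <= (scope_end j).+1 <= scope_end i by have := leq_scope_end j; lia.
move/scope_end_min; lia.
Qed.

Hypothesis h_step : forall k, k < m -> h k.+1 <= (h k).+1.

Lemma scope_end_split i :
  i < scope_end i -> scope_end i.+1 < scope_end i ->
  scope_end (scope_end i.+1).+1 = scope_end i.
Proof.
move=> iei lt; have im := scope_end_gt_bound iei.
have e1m : scope_end i.+1 < m by have := scope_end_le (ltnW im); lia.
have := scope_end_drop e1m; have := h_step im; have := leq_scope_end i.+1 => *.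
apply/eqP; rewrite eqn_leq scope_end_nest ?scope_end_ext //; lia.
Qed.

Variable branch : pred nat.

Definition nbranch a b := count branch (iota a (b - a)).

Lemma nbranch_cat a b c : a <= b <= c -> nbranch a c = nbranch a b + nbranch b c.
Proof.
move=> abc; rewrite /nbranch (_ : c - a = (b - a) + (c - b)) ?iotaD ?count_cat; last lia.
by rewrite subnKC //; lia.
Qed.

Lemma nbranch1 a : nbranch a a.+1 = branch a.
Proof. by rewrite /nbranch subSnn /=; case: branch. Qed.

Lemma nbranch_gt0 a b : 0 < nbranch a b -> exists2 k, a <= k < b & branch k.
Proof.
rewrite /nbranch -has_count => /hasP[k]; rewrite mem_iota => akb bk.
by exists k => //; lia.
Qed.

Definition weight i := nbranch i (scope_end i).

Lemma weight_gt0 i : 0 < weight i -> i < scope_end i.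
Proof.
by case: (leqP (scope_end i) i) => // ei; rewrite /weight /nbranch (_ : _ - _ = 0) //; lia.
Qed.

Definition descends i j := [&& i < j, j <= scope_end i & weight j < weight i].

Lemma descends_trans : transitive descends.
Proof.
move=> j i k /and3P[ij je wij] /and3P[jk ke wjk].
have : scope_end j <= scope_end i by apply: scope_end_nest; lia.
by move=> ?; apply/and3P; split; lia.
Qed.

Lemma descends_branch i j :
  descends i j -> exists2 k, branch k & i <= k < j \/ scope_end j <= k < scope_end i.
Proof.
case/and3P=> ij je wji.
have ej : j <= scope_end j := leq_scope_end j.
have eji : scope_end j <= scope_end i by apply: scope_end_nest; lia.
move: wji; rewrite /weight (@nbranch_cat i j (scope_end i)); last lia.
rewrite (@nbranch_cat j (scope_end j) (scope_end i)); last lia.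
case: (posnP (nbranch i j)) => [-> | /nbranch_gt0[k ? ?]] w; last by exists k; auto.
have /nbranch_gt0[k ? ?] : 0 < nbranch (scope_end j) (scope_end i) by lia.
by exists k; auto.
Qed.

Lemma scope_end0 : h 0 = 0 -> scope_end 0 = m.
Proof.
move=> h0; rewrite /scope_end hasNfind ?size_iota ?subn0 //.
by apply/hasPn => j _; rewrite h0.
Qed.

Lemma size_branch_seq c (s : seq nat) :
  uniq s -> (forall k, k \in s -> k <= c /\ branch k) -> size s <= (nbranch 0 c).+1.
Proof.
move=> us sP; apply: (@leq_trans (nbranch 0 c.+1)).
  rewrite /nbranch -size_filter; apply: uniq_leq_size => // k /sP[kc bk].
  by rewrite mem_filter bk mem_iota; lia.
rewrite (@nbranch_cat 0 c c.+1) ?nbranch1; last lia.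
by have := leq_b1 (branch c); lia.
Qed.

Lemma size_le_weight0 (s : seq nat) : h 0 = 0 -> uniq s ->
  (forall k, k \in s -> k <= m /\ branch k) -> size s <= (weight 0).+1.
Proof. by move=> h0 us sP; rewrite /weight scope_end0 //; apply: size_branch_seq. Qed.

Lemma descends_heavy f i : f.*2.+2 <= weight i -> exists2 j, descends i j & f <= weight j.
Proof.
have [n] := ubnP (scope_end i - i); elim: n i => // n IH i lt_n wi.
have iei : i < scope_end i by apply: weight_gt0; lia.
have e1 : i.+1 <= scope_end i.+1 <= scope_end i.
  by rewrite leq_scope_end scope_end_nest //; lia.
have child c : i < c <= scope_end i -> f <= weight c -> weight c <= weight i ->
    exists2 j, descends i j & f <= weight j.
  move=> ic fc ci; have ec : scope_end c <= scope_end i by apply: scope_end_nest; lia.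
  case: (ltnP (weight c) (weight i)) => [lt | ge].
    by exists c => //; apply/and3P; split; lia.
  have [j /and3P[cj je wj] fj] := IH c ltac:(lia) ltac:(lia).
  by exists j => //; apply/and3P; split; lia.
have wsplit : weight i = branch i + weight i.+1 + nbranch (scope_end i.+1) (scope_end i).
  rewrite /weight (@nbranch_cat i i.+1 (scope_end i)) ?nbranch1; last lia.
  by rewrite (@nbranch_cat i.+1 (scope_end i.+1) (scope_end i)); lia.
have := leq_b1 (branch i); case: (ltngtP (scope_end i.+1) (scope_end i)) => [lt | | eq]; try lia.
- set c := (scope_end i.+1).+1.
  have ec : scope_end c = scope_end i by apply: scope_end_split.
  have := leq_b1 (branch (scope_end i.+1)).
  have : nbranch (scope_end i.+1) (scope_end i) = branch (scope_end i.+1) + weight c.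
    by rewrite /weight ec (@nbranch_cat _ c) ?nbranch1; lia.
  case: (leqP f (weight i.+1)) => [fw | wf] *; first by apply: (child i.+1); lia.
  by apply: (child c); lia.
- by move: wsplit; rewrite eq /nbranch subnn /= => *; apply: (child i.+1); lia.
Qed.

Lemma descending_chain n i : 3 * 2 ^ n <= (weight i).+2 ->
  exists s, [/\ size s = n, sorted descends (i :: s) & all (fun j => 0 < weight j) (i :: s)].
Proof.
elim: n i => [|n IH] i wi.
  by exists [::]; split => //=; rewrite andbT; move: wi; rewrite expn0; lia.
have [j ij wj] : exists2 j, descends i j & 3 * 2 ^ n - 2 <= weight j.
  by apply: descends_heavy; move: wi; rewrite -muln2 expnS; lia.
have [s [ss so pos]] := IH j ltac:(lia).
exists (j :: s); split => /=; [by rewrite ss | by rewrite ij | ].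
by case/and3P: ij => _ _ wji; apply/andP; split; [lia | exact: pos].
Qed.

Lemma descends_collision (C : finType) (cls : nat -> C) i :
  3 * 2 ^ #|C| <= (weight i).+2 ->
  exists b t, [/\ descends b t, 0 < weight t & cls b = cls t].
Proof.
move=> /descending_chain[s [ss so pos]].
have : ~~ uniq (map cls (i :: s)).
  apply/negP => /card_uniqP; rewrite size_map /= ss => u.
  by have := max_card (mem (map cls (i :: s))); rewrite u ltnn.
case/(uniqPn (cls i)) => p [q [pq]]; rewrite size_map => qs.
rewrite !(nth_map i) //; last lia.
exists (nth i (i :: s) p), (nth i (i :: s) q); split => //.
- by apply: (sorted_ltn_nth descends_trans) => //; exact: ltn_trans pq qs.
- by apply: (all_nthP i pos).
Qed.
End ScopeEnd.

Section DerivationTree.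
Variables (N T F : finType) (G : grammar N T F) (d : F).
Implicit Types (t : dtree N T F) (ch : seq (dtree N T F)).

Lemma sub_cat t u v : sub t (u ++ v) = obind (fun t' => sub t' v) (sub t u).
Proof. by elim: u t => [|i u IH] [w|A x ch] //=; case: onth. Qed.

Lemma sub_rcons t v j :
  sub t (rcons v j) = if sub t v is Some (Node _ _ ch) then onth ch j else None.
Proof. by rewrite -cats1 sub_cat; case: sub => [[w|A x ch]|] //=; case: onth. Qed.

Lemma valid_onth ch j c :
  foldr (fun c P => valid G d c /\ P) True ch -> onth ch j = Some c -> valid G d c.
Proof. by elim: ch j => [|c0 ch IH] [|j] //= [vc0 vch]; [case=> <- | apply: IH]. Qed.

Lemma valid_sub t u t' : valid G d t -> sub t u = Some t' -> valid G d t'.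
Proof.
elim: u t => [|i u IH] t; first by move=> vt [<-].
case: t => [//|A x ch] /= [_ vch]; case E: onth => [c|//].
exact/IH/(valid_onth vch E).
Qed.

Lemma applies_children p A x ch : applies d p A x ch ->
  (exists2 z : seq F, size z <= (size x).+1 &
     forall j c, onth ch j = Some c -> exists B, label c = Some (B, z)) \/
  (forall j c, onth ch j = Some c -> label c = None).
Proof.
have common z (bs : seq N) : map (@label N T F) ch = map (fun B => Some (B, z)) bs ->
    forall j c, onth ch j = Some c -> exists B, label c = Some (B, z).
  move=> E j c Ec; have := congr1 (fun s => onth s j) E; rewrite !onth_map Ec /=.
  by case: onth => //= B [->]; exists B.
case: p => [A' r | A' B f | A' f r] /=.
- by case=> _ [bs [_ E]]; left; exists x => //; apply: common E.
- by case=> _ E; left; exists (f :: x) => //; apply: (common _ [:: B]).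
- case=> _ [y [-> [[_ [_ [w [_ ->]]]] | [_ [bs [_ E]]]]]].
    by right=> [[|[|j]]] c //= [<-].
  by left; exists y => /=; [lia | apply: common E].
Qed.

Lemma in_scope_lab (t : dtree N T F) v v' : in_scope t v v' ->
  exists A x B y, [/\ lab t v = Some (A, x), lab t v' = Some (B, y) & size x <= size y].
Proof.
case=> A [x [Ex [c [-> Hc]]]]; have [B [y [Ey xy]]] := Hc _ (leqnn (size c)).
by exists A, x, B, y; rewrite take_size in Ey.
Qed.

Section ValidTree.
Variable t : dtree N T F.
Hypothesis t_valid : valid G d t.

Lemma lab_child_size v j A x B y :
  lab t v = Some (A, x) -> lab t (rcons v j) = Some (B, y) -> size y <= (size x).+1.
Proof.
rewrite /lab sub_rcons; case Ev: (sub t v) => [[|A' x' ch]|] //= [_ <-].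
have [[p [_ /applies_children shape]] _] := valid_sub t_valid Ev.
case Ec: (onth ch j) => [c|//] /= Ey.
case: shape => [[z zx Hz] | Hleaf]; last by move: Ey; rewrite (Hleaf _ _ Ec).
by have [B' Bz] := Hz _ _ Ec; move: Ey; rewrite Bz => -[_ <-].
Qed.

Lemma lab_sibling v j j' B y c :
  lab t (rcons v j) = Some (B, y) -> sub t (rcons v j') = Some c ->
  exists B', label c = Some (B', y).
Proof.
rewrite /lab !sub_rcons; case Ev: (sub t v) => [[|A x ch]|] //=.
have [[p [_ /applies_children shape]] _] := valid_sub t_valid Ev.
case Ec0: (onth ch j) => [c0|//] /= Ey Ec.
case: shape => [[z _ Hz] | Hleaf]; last by move: Ey; rewrite (Hleaf _ _ Ec0).
by have [B0 Bz] := Hz _ _ Ec0; move: Ey; rewrite Bz => -[_ <-]; exact: Hz Ec.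
Qed.
End ValidTree.

Section RootLeafPath.
Variables (D : dtree N T F) (a : seq nat) (j0 : nat) (w0 : seq T).
Hypothesis D_valid : valid G d D.
Hypothesis leaf_below : sub D (rcons a j0) = Some (Leaf N F w0).

Definition path_height k := if lab D (take k a) is Some (_, x) then size x else 0.
Definition path_sigma k := if lab D (take k a) is Some (A, _) then A else g_start G.

Lemma node_on_path k : exists A x ch, sub D (take k a) = Some (Node A x ch).
Proof.
have E : rcons a j0 = take k a ++ (drop k a ++ [:: j0]) by rewrite catA cat_take_drop cats1.
move: leaf_below; rewrite E sub_cat.
case: (sub D (take k a)) => [[w|A x ch]|] //=; last by exists A, x, ch.
by case: (drop k a).
Qed.

Lemma lab_on_path k : exists x, lab D (take k a) = Some (path_sigma k, x) /\ size x = path_height k.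
Proof.
by have [A [x [ch E]]] := node_on_path k; exists x; rewrite /path_sigma /path_height /lab E.
Qed.

Lemma sigma_on_path k : sigma D (take k a) = Some (path_sigma k).
Proof. by have [x [E _]] := lab_on_path k; rewrite /sigma E. Qed.

Lemma path_height0 : label D = Some (g_start G, [::]) -> path_height 0 = 0.
Proof. by rewrite /path_height take0 /lab /= => ->. Qed.

Lemma path_height_step k : k < size a -> path_height k.+1 <= (path_height k).+1.
Proof.
move=> ka; have [x [Ex <-]] := lab_on_path k; have [y [Ey <-]] := lab_on_path k.+1.
by rewrite (take_nth 0 ka) in Ey; apply: lab_child_size Ex Ey.
Qed.

Lemma in_scope_path i e : i <= e ->
  (forall k, i <= k <= e -> path_height i <= path_height k) ->
  in_scope D (take i a) (take e a).
Proof.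
move=> ie hmin; have [x [Ex hx]] := lab_on_path i.
exists (path_sigma i), x; split => //; exists (take (e - i) (drop i a)); split.
  by rewrite -takeD subnKC.
move=> k ke; have kei : k <= e - i by move: ke; rewrite size_take; case: ifP; lia.
rewrite take_takel // -takeD; have [y [Ey hy]] := lab_on_path (i + k).
by exists (path_sigma (i + k)), y; split => //; rewrite hx hy hmin //; lia.
Qed.

(* Below the last node of the path there are only leaves, which lie in no scope. *)
Lemma notin_scope_below i e j :
  (e < size a -> path_height e.+1 < path_height i) ->
  ~ in_scope D (take i a) (rcons (take e a) j).
Proof.
move=> drop /in_scope_lab[A [x [B [y [Ex Ey xy]]]]].
have [x' [Ex' hx']] := lab_on_path i; move: Ex'; rewrite Ex => -[_ xx'].
have [ea|ae] := ltnP e (size a); last first.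
  by rewrite take_oversize // in Ey; case: (lab_sibling D_valid Ey leaf_below).
have [A' [z [ch Ez]]] := node_on_path e.+1.
have hz : path_height e.+1 = size z by rewrite /path_height /lab Ez.
rewrite (take_nth 0 ea) in Ez; have [B' [_ zy]] := lab_sibling D_valid Ey Ez.
by have := drop ea; rewrite hz zy -hx' -xx'; lia.
Qed.

Lemma in_beta_path i : in_beta D (take i a) (take (scope_end (size a) path_height i) a).
Proof.
split; first by apply: in_scope_path => [|k]; [exact: leq_scope_end | apply: scope_end_min].
by move=> j; apply: notin_scope_below => /scope_end_drop.
Qed.
End RootLeafPath.
End DerivationTree.

Definition truth (P : Prop) : bool := if excluded_middle_informative P then true else false.

Lemma truthP (P : Prop) : reflect P (truth P).
Proof. by rewrite /truth; case: excluded_middle_informative => p; constructor. Qed.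

Lemma truth_inj (P Q : Prop) : truth P = truth Q -> P = Q.
Proof.
move=> E; apply: propositional_extensionality.
by split=> /truthP; [rewrite E | rewrite -E] => /truthP.
Qed.

Section TauCode.
Variables (N T F : finType) (s : seq T) (M : {set 'I_(size s)}) (D : dtree N T F).

Definition beta_sigma v A := exists v', in_beta D v v' /\ sigma D v' = Some A.

Definition beta_marked_sigma v A :=
  exists v', in_beta D v v' /\ marked M D v' /\ sigma D v' = Some A.

Lemma beta_marked_sigma_sub v A : beta_marked_sigma v A -> beta_sigma v A.
Proof. by case=> v' [bv [_ sv]]; exists v'. Qed.

Lemma tauE v :
  tau M D v = ((fun A => ~ beta_sigma v A),
               (fun A => beta_sigma v A /\ ~ beta_marked_sigma v A),
               beta_marked_sigma v).
Proof.
rewrite /tau; congr (_, _, _); apply: functional_extensionality => A;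
  apply: propositional_extensionality.
- by split=> [H [v' [bv sv]] | H v' bv sv]; [exact: H bv sv | apply: H; exists v'].
- split=> -[bs H]; split=> //.
    by move=> [v' [bv [mv sv]]]; exact: H bv mv sv.
  by move=> v' bv mv sv; apply: H; exists v'.
Qed.

(* [tau v] is determined by two predicates on N, the first implied by the
   second, so it is encoded by the number 0, 1 or 2 of them holding. *)
Definition tau_code v : {ffun N -> 'I_3} :=
  [ffun A => inord (truth (beta_sigma v A) + truth (beta_marked_sigma v A))].

Lemma tau_code_tau v1 v2 : tau_code v1 = tau_code v2 -> tau M D v1 = tau M D v2.
Proof.
move=> E; have truthE A :
    truth (beta_sigma v1 A) = truth (beta_sigma v2 A) /\
    truth (beta_marked_sigma v1 A) = truth (beta_marked_sigma v2 A).
  have := congr1 (fun c : {ffun N -> 'I_3} => val (c A)) E; rewrite !ffunE /=.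
  have sub v : truth (beta_marked_sigma v A) ==> truth (beta_sigma v A).
    by apply/implyP => /truthP/beta_marked_sigma_sub/truthP.
  move: (sub v1) (sub v2).
  by do 4!case: truth => //=; rewrite ?inordK.
have Es : beta_sigma v1 = beta_sigma v2.
  by apply: functional_extensionality => A; apply: truth_inj; case: (truthE A).
have Em : beta_marked_sigma v1 = beta_marked_sigma v2.
  by apply: functional_extensionality => A; apply: truth_inj; case: (truthE A).
by rewrite !tauE Es Em.
Qed.
End TauCode.

Lemma three_pow2_le n k : 0 < n -> 3 * 2 ^ k <= (n * 3 ^ n) ^ k.+1.
Proof.
move=> n_gt0; have K3 : 3 <= n * 3 ^ n.
  have : 3 ^ 1 <= 3 ^ n by rewrite leq_exp2l.
  by rewrite expn1 => /leq_trans; apply; apply: leq_pmull.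
rewrite expnS leq_mul //.
by elim: k => // k IH; rewrite !expnS leq_mul //; lia.
Qed.

Theorem lemma1 (N T F : finType) (G : grammar N T F) (d : F) (s : seq T)
  (D : dtree N T F) (M : {set 'I_(size s)}) (a : seq nat) :
  grounded_by G d ->
  derivation_tree G d s D ->
  root_leaf_path D a ->
  (exists idx : seq nat,
     uniq idx /\
     (#|N| * 3 ^ #|N|) ^ (#|N| ^ 2 * 3 ^ #|N| + 1) < size idx /\
     forall i, i \in idx -> i <= size a /\ branch_node M D (take i a)) ->
  exists b1 t1 t2 b2 : nat,
    [/\ b1 < t1, t1 < t2, t2 <= b2 & b2 <= size a] /\
    sigma D (take b1 a) = sigma D (take t1 a) /\
    sigma D (take t2 a) = sigma D (take b2 a) /\
    in_beta D (take b1 a) (take b2 a) /\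
    in_beta D (take t1 a) (take t2 a) /\
    tau M D (take b1 a) = tau M D (take t1 a) /\
    ((exists i, b1 <= i < t1 /\ branch_node M D (take i a)) \/
     (exists i, t2 <= i < b2 /\ branch_node M D (take i a))).
Proof.
move=> _ [D_valid [D_root _]] [j0 [w0 leaf]] [idx [uidx [big_idx idx_branch]]].
set e := scope_end (size a) (path_height D a).
pose branch k := truth (branch_node M D (take k a)).
pose cls k := (path_sigma G D a k, tau_code M D (take k a), path_sigma G D a (e k)).
have h_step := path_height_step D_valid leaf.
have heavy : 3 * 2 ^ #|{: N * {ffun N -> 'I_3} * N}| <=
    (weight (size a) (path_height D a) branch 0).+2.
  have N_gt0 : 0 < #|N| by apply/card_gt0P; exists (g_start G).
  have idx_bp k : k \in idx -> k <= size a /\ branch k by move/idx_branch=> [? /truthP].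
  have := size_le_weight0 (path_height0 a D_root) uidx idx_bp.
  have := three_pow2_le (#|N| ^ 2 * 3 ^ #|N|) N_gt0; rewrite addn1 in big_idx.
  rewrite !card_prod card_ffun !card_ord mulnAC mulnn; lia.
have [b [t [bt wt [sigma_bt code_bt sigma_ebt]]]] := descends_collision h_step cls heavy.
case/and3P: (bt) => lt_bt te _; have tet : t < e t := weight_gt0 wt.
have etb : e t <= e b by apply: scope_end_nest; rewrite (ltnW lt_bt) te.
have ebm : e b <= size a by apply/scope_end_le/ltnW/scope_end_gt_bound/(leq_trans lt_bt te).
exists b, t, (e t), (e b); split; first by split.
rewrite !(sigma_on_path G leaf) sigma_bt sigma_ebt.
do 2 (split; first by []).
split; first exact: (in_beta_path D_valid leaf b).
split; first exact: (in_beta_path D_valid leaf t).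
split; first exact: tau_code_tau.
have [k /truthP bk [kbt | kebt]] := descends_branch bt; [left | right]; by exists k.
Qed.
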